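(* Let $a_1,\dots,a_8$ be pairwise distinct positive reals and let $$\mathscr H_{\mathrm{small}}=\{P^{(0)}_1(a_i): i=1,\dots,4\}\cup\{P^{(1)}_2(a_i,0): i=5,\dots,8\}.$$ If the simple one-layer GNN with parameters $w_2,W_{11},W_{12},b_1,b_2$ satisfies $h^{(1)}_u(G)=x_u(\Gamma(G))$ for every $G\in\mathscr H_{\mathrm{small}}$ and every $u\in V(G)$, then $w_2W_{11}=w_2W_{12}=1$ and $w_2b_1+b_2=0$.
   Context: Attributed graphs: $G=(V,E,X_{\mathrm v},X_{\mathrm e})$ with $V$ finite, $E$ a set of undirected edges, nonnegative edge weights $x_{(u,v)}=x_{(v,u)}\ge 0$ and nonnegative real node features $x_v$. Every node carries a self-loop of weight $x_{(v,v)}=0$, and $\mathcal N(v)=\{v\}\cup\{u:\{u,v\}\in E\}$. A constant $\beta>0$ (larger than all sums of edge weights considered) encodes ''infinite distance''. $x_v(H)$ denotes the feature of node $v$ in graph $H$. The Bellman–Ford operator $\Gamma$ sends $G$ to the graph with the same vertices, edges and edge weights and node features $x'_v=\min\{x_u+x_{(u,v)}:u\in\mathcal N(v)\}$. For a source $s$, $\mathrm d^{(t)}(s,v)$ is the minimal total weight of a walk from $s$ to $v$ with at most $t$ edges, or $\beta$ if none exists. $P^{(t)}_k(a_1,\dots,a_k)$ is the path graph with vertices $v_0,\dots,v_k$, edges $\{v_{i-1},v_i\}$ of weight $a_i$, and node features $x_{v_i}=\mathrm d^{(t)}(v_0,v_i)$. Simple one-layer GNN: with $\sigma(z)=\max(z,0)$,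 $$h^{(1)}_v(G)=\sigma\Big(w_2\min_{u\in\mathcal N(v)}\sigma\big(W_{11}x_u+W_{12}x_{(u,v)}+b_1\big)+b_2\Big).$$ *)

From HB Require Import structures.
From mathcomp Require Import all_boot all_order all_algebra.
Unset Printing Implicit Defensive.
Import Order.TTheory GRing.Theory Num.Theory.
Local Open Scope ring_scope.

(* Attributed graph with vertex set 'I_nv, (undirected) edge relation adj,
   edge weights ew (only consulted on edges) and node features xv. *)
Record agraph {R : realFieldType} := AGraph {
  nv : nat;
  adj : rel 'I_nv;
  ew : 'I_nv -> 'I_nv -> R;
  xv : 'I_nv -> R }.
Arguments agraph R : clear implicits.
Arguments AGraph {R} nv adj ew xv.


Definition xe {R : realFieldType} (G : agraph R) (u v : 'I_(nv G)) : R :=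
  if u == v then 0 else ew G u v.

(* min over the neighbourhood N(v) = {v} ∪ {u : {u,v} ∈ E} *)
Definition nbmin {R : realFieldType} (G : agraph R) (v : 'I_(nv G)) (F : 'I_(nv G) -> R) : R :=
  \big[Num.min/F v]_(u | adj G u v) F u.

Definition BF_feat {R : realFieldType} (G : agraph R) (v : 'I_(nv G)) : R :=
  nbmin G v (fun u => xv G u + xe G u v).

Definition Gamma {R : realFieldType} (G : agraph R) : agraph R :=
  AGraph (nv G) (adj G) (ew G) (BF_feat G).

Definition relu {R : realFieldType} (z : R) : R := Num.max z 0.

Definition h1 {R : realFieldType} (w2 W11 W12 b1 b2 : R) (G : agraph R) (v : 'I_(nv G)) : R :=
  relu (w2 * nbmin G v (fun u => relu (W11 * xv G u + W12 * xe G u v + b1)) + b2).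

Fixpoint seqs_upto (n t : nat) : seq (seq 'I_n) :=
  match t with
  | 0 => [:: [::]]
  | t'.+1 => [::] :: [seq x :: p | x <- enum 'I_n, p <- seqs_upto n t']
  end.

Fixpoint walk_weight {R : realFieldType} (G : agraph R) (s : 'I_(nv G)) (p : seq 'I_(nv G)) : R :=
  match p with
  | [::] => 0
  | x :: p' => ew G s x + walk_weight G x p'
  end.

(* d^(t)(s,v): minimal weight of a walk from s to v with at most t edges,
   or beta if there is none *)
Definition dist {R : realFieldType} (beta : R) (t : nat) (G : agraph R) (s v : 'I_(nv G)) : R :=
  let ws := [seq walk_weight G s p | p <- seqs_upto (nv G) t
             & path (adj G) s p && (last s p == v)] in
  match ws with
  | [::] => beta
  | w :: ws' => foldr Num.min w ws'
  end.

(* path graph with vertices v_0..v_k (k = size a), edge {v_(i-1), v_i}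
   of weight a_i (a is 0-indexed: a_i = nth 0 a (i-1)) *)
Definition path_adj (k : nat) : rel 'I_k.+1 :=
  fun i j => (i.+1 == j :> nat) || (j.+1 == i :> nat).

Definition path_skel {R : realFieldType} (a : seq R) : agraph R :=
  AGraph (size a).+1 (path_adj (size a))
    (fun i j => nth 0 a (maxn i j).-1) (fun _ => 0).

(* P^(t)_k(a_1,...,a_k) with features x_{v_i} = d^(t)(v_0, v_i) *)
Definition pathG {R : realFieldType} (beta : R) (t : nat) (a : seq R) : agraph R :=
  AGraph (size a).+1 (path_adj (size a))
    (fun i j => nth 0 a (maxn i j).-1)
    (fun v => dist beta t (path_skel a) ord0 v).

From HB Require Import structures.
From mathcomp Require Import all_boot all_order all_algebra.
From mathcomp Require Import ring zify.
Set Implicit Arguments.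
Unset Strict Implicit.
Unset Printing Implicit Defensive.

Import Order.TTheory GRing.Theory Num.Theory.
Local Open Scope ring_scope.

(* At the far vertex of each training graph, Gamma yields the edge weight a_i, while
   the GNN outputs w2 * min(c, relu(k a_i + b1)) + b2 with c = relu(W11 beta + b1)
   independent of i (k = W12 on the one-edge graphs, k = W11 on the two-edge ones).
   Unfolding the ReLUs, a_i equals either w2 c + b2, or b2, or w2 (k a_i + b1) + b2.
   The two constants absorb at most two of four distinct values a_i, so the affine map
   x |-> w2 (k x + b1) + b2 has two distinct fixed points and is the identity. *)

Section Readout.
Variable R : realFieldType.

Lemma relu_eq_pos (z x : R) : 0 < x -> relu z = x -> z = x.
Proof. by move=> x_gt0; rewrite /relu maxEle; case: ifP => // _ x0; rewrite -x0 ltxx in x_gt0. Qed.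

Lemma relu_readout_cases (w2 b2 p q x : R) :
  0 < x -> relu (w2 * Num.min (relu q) (relu p) + b2) = x ->
  [\/ x = w2 * relu p + b2, x = b2 | x = w2 * q + b2].
Proof.
move=> x_gt0 /(relu_eq_pos x_gt0) <-.
have [->|->|->] : [\/ Num.min (relu q) (relu p) = relu p,
                     Num.min (relu q) (relu p) = 0 | Num.min (relu q) (relu p) = q].
  rewrite /relu !maxEle minEle; case: (leP q 0) => _; case: (leP p 0) => _;
    rewrite ?lexx //; try case: ifP => _; by [apply: Or31 | apply: Or32 | apply: Or33].
all: rewrite ?mulr0 ?add0r; by [apply: Or31 | apply: Or32 | apply: Or33].
Qed.

Lemma affine_fixpoints_id (w2 k b1 b2 x y : R) : x != y ->
  x = w2 * (k * x + b1) + b2 -> y = w2 * (k * y + b1) + b2 ->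
  w2 * k = 1 /\ w2 * b1 + b2 = 0.
Proof.
move=> xy fx fy.
have slope : (w2 * k - 1) * (x - y) = 0.
  have -> : (w2 * k - 1) * (x - y)
            = (w2 * (k * x + b1) + b2 - x) - (w2 * (k * y + b1) + b2 - y) by ring.
  by rewrite -fx -fy !subrr.
move/eqP: slope; rewrite mulf_eq0 !subr_eq0 (negbTE xy) orbF => /eqP slope.
have affine : w2 * (k * x + b1) + b2 = w2 * k * x + (w2 * b1 + b2) by ring.
by split=> //; apply: (@addrI _ x); rewrite addr0 {2}fx affine slope mul1r.
Qed.

Lemma affine_id_of_cover (w2 k b1 b2 c : R) (s : seq R) :
  uniq s -> (3 < size s)%N ->
  {in s, forall x, [\/ x = c, x = b2 | x = w2 * (k * x + b1) + b2]} ->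
  w2 * k = 1 /\ w2 * b1 + b2 = 0.
Proof.
move=> s_uniq s_size s_cover.
pose fixed : pred R := fun x => x == w2 * (k * x + b1) + b2.
have unfixed_small : (count (predC fixed) s <= 2)%N.
  rewrite -size_filter -[2%N]/(size [:: c; b2]).
  apply: uniq_leq_size; first exact: filter_uniq.
  move=> x; rewrite mem_filter /= => /andP [unfixed /s_cover].
  rewrite !inE; case=> [->|->|fx]; rewrite ?eqxx ?orbT //.
  by rewrite /fixed -fx eqxx in unfixed.
have fixed_many : (1 < size (filter fixed s))%N.
  move: (count_predC fixed s); rewrite size_filter; lia.
case E: (filter fixed s) fixed_many => [|x [|y t]] // _.
have /andP [+ _] : uniq (x :: y :: t) by rewrite -E filter_uniq.
rewrite inE negb_or => /andP [xy _].
have : y \in filter fixed s by rewrite E !inE eqxx orbT.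
have : x \in filter fixed s by rewrite E mem_head.
rewrite !mem_filter => /andP [/eqP fx _] /andP [/eqP fy _].
exact: affine_fixpoints_id xy fx fy.
Qed.

Lemma affine_id_of_indexed_cover (I : finType) (P : {pred I}) (a : I -> R)
    (w2 k b1 b2 c : R) :
  injective a -> (3 < #|P|)%N ->
  (forall i, i \in P -> [\/ a i = c, a i = b2 | a i = w2 * (k * a i + b1) + b2]) ->
  w2 * k = 1 /\ w2 * b1 + b2 = 0.
Proof.
move=> a_inj P_card P_cover; apply: (@affine_id_of_cover _ _ _ _ c (map a (enum P))).
- by rewrite (map_inj_uniq a_inj) enum_uniq.
- by rewrite size_map -cardE.
- by move=> x /mapP [i]; rewrite mem_enum => /P_cover cover_i ->.
Qed.
End Readout.

Ltac unfold_small_path :=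
  rewrite /nbmin /= ![index_enum _]unlock -!enumT !enum_ordSl enum_ord0 !big_cons big_nil
    /= /xe /dist /= ?enum_ordSl ?enum_ord0 /= !(mulr0, addr0, add0r).

Section PathGraphs.
Variables (R : realFieldType) (beta x w2 W11 W12 b1 b2 : R).

Lemma h1_path1_last :
  h1 w2 W11 W12 b1 b2 (pathG beta 0 [:: x]) ord_max
  = relu (w2 * Num.min (relu (W12 * x + b1)) (relu (W11 * beta + b1)) + b2).
Proof. by rewrite /h1; unfold_small_path. Qed.

Lemma Gamma_path1_last : xv (Gamma (pathG beta 0 [:: x])) ord_max = Num.min x beta.
Proof. by rewrite /= /BF_feat; unfold_small_path. Qed.

Lemma h1_path2_last :
  h1 w2 W11 W12 b1 b2 (pathG beta 1 [:: x; 0]) ord_max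
  = relu (w2 * Num.min (relu (W11 * x + b1)) (relu (W11 * beta + b1)) + b2).
Proof. by rewrite /h1; unfold_small_path. Qed.

Lemma Gamma_path2_last : xv (Gamma (pathG beta 1 [:: x; 0])) ord_max = Num.min x beta.
Proof. by rewrite /= /BF_feat; unfold_small_path. Qed.

Hypotheses (x_gt0 : 0 < x) (x_lt_beta : x < beta).

Lemma path1_readout_cases :
  h1 w2 W11 W12 b1 b2 (pathG beta 0 [:: x]) ord_max
    = xv (Gamma (pathG beta 0 [:: x])) ord_max ->
  [\/ x = w2 * relu (W11 * beta + b1) + b2, x = b2 | x = w2 * (W12 * x + b1) + b2].
Proof.
rewrite h1_path1_last Gamma_path1_last (min_l (ltW x_lt_beta)).
exact: relu_readout_cases x_gt0.
Qed.

Lemma path2_readout_cases :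
  h1 w2 W11 W12 b1 b2 (pathG beta 1 [:: x; 0]) ord_max
    = xv (Gamma (pathG beta 1 [:: x; 0])) ord_max ->
  [\/ x = w2 * relu (W11 * beta + b1) + b2, x = b2 | x = w2 * (W11 * x + b1) + b2].
Proof.
rewrite h1_path2_last Gamma_path2_last (min_l (ltW x_lt_beta)).
exact: relu_readout_cases x_gt0.
Qed.

End PathGraphs.

Theorem mainTheorem2 (R : realFieldType) (beta : R) (a : 'I_8 -> R)
    (w2 W11 W12 b1 b2 : R) :
  0 < beta ->
  (forall i, 0 < a i) ->
  injective a ->
  (forall i, a i < beta) ->
  (forall i : 'I_8, (i < 4)%N ->
     forall u, h1 w2 W11 W12 b1 b2 (pathG beta 0 [:: a i]) u
               = xv (Gamma (pathG beta 0 [:: a i])) u) ->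
  (forall i : 'I_8, (4 <= i)%N ->
     forall u, h1 w2 W11 W12 b1 b2 (pathG beta 1 [:: a i; 0]) u
               = xv (Gamma (pathG beta 1 [:: a i; 0])) u) ->
  w2 * W11 = 1 /\ w2 * W12 = 1 /\ w2 * b1 + b2 = 0.
Proof.
move=> _ a_gt0 a_inj a_lt_beta agree1 agree2.
have [-> ->] : w2 * W11 = 1 /\ w2 * b1 + b2 = 0.
  apply: (affine_id_of_indexed_cover (P := [pred i : 'I_8 | 4 <= i]%N) a_inj).
    by rewrite cardE /enum_mem -enumT /= !enum_ordSl enum_ord0.
  move=> i i_ge4; exact: path2_readout_cases (a_gt0 i) (a_lt_beta i) (agree2 i i_ge4 _).
have [-> _] : w2 * W12 = 1 /\ w2 * b1 + b2 = 0.
  apply: (affine_id_of_indexed_cover (P := [pred i : 'I_8 | i < 4]%N) a_inj).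
    by rewrite cardE /enum_mem -enumT /= !enum_ordSl enum_ord0.
  move=> i i_lt4; exact: path1_readout_cases (a_gt0 i) (a_lt_beta i) (agree1 i i_lt4 _).
by [].
Qed.
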